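(* Let $p$ be a prime and $\Gamma$ a profinite group acting trivially on $\mathbb{F}_p$. If every open subgroup of $\Gamma$ admits the cup product exact sequence property, then every closed subgroup of $\Gamma$ admits the cup product exact sequence property.
   Context: All cohomology is continuous with coefficients in the trivial module $\mathbb{F}_p$. A profinite group $H$ admits the cup product exact sequence property if for every $\chi\in H^1(H,\mathbb{F}_p)=\operatorname{Hom}(H,\mathbb{F}_p)$ the sequence $H^1(\ker\chi,\mathbb{F}_p)\xrightarrow{\operatorname{Cor}}H^1(H,\mathbb{F}_p)\xrightarrow{\chi\cup}H^2(H,\mathbb{F}_p)\xrightarrow{\operatorname{Res}}H^2(\ker\chi,\mathbb{F}_p)$ is exact at $H^1(H,\mathbb{F}_p)$ and at $H^2(H,\mathbb{F}_p)$. *)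

From mathcomp Require Import all_boot all_algebra.
From mathcomp Require Import boolp classical_sets topology.
Set Implicit Arguments. Unset Strict Implicit. Unset Printing Implicit Defensive.
Import GRing.Theory.
Local Open Scope classical_set_scope.
Local Open Scope ring_scope.

Record profinite_group := ProfiniteGroup {
  pg_car :> topologicalType;
  pg_mul : pg_car -> pg_car -> pg_car;
  pg_inv : pg_car -> pg_car;
  pg_one : pg_car;
  pg_mulA : forall x y z, pg_mul x (pg_mul y z) = pg_mul (pg_mul x y) z;
  pg_mul1g : forall x, pg_mul pg_one x = x;
  pg_mulVg : forall x, pg_mul (pg_inv x) x = pg_one;
  pg_mul_cont : continuous (fun xy : pg_car * pg_car => pg_mul xy.1 xy.2);
  pg_inv_cont : continuous pg_inv;
  pg_compact : compact [set: pg_car];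
  pg_hausdorff : hausdorff_space pg_car;
  pg_tot_disc : totally_disconnected [set: pg_car]
}.

Section Defs.
Variable G : profinite_group.
Local Notation "x * y" := (pg_mul x y) : pg_scope.
Delimit Scope pg_scope with pg.

Definition is_subgroup (H : set G) : Prop :=
  H (pg_one G) /\ (forall x y, H x -> H y -> H (x * y)%pg) /\
  (forall x, H x -> H (pg_inv x)).
Definition closed_subgroup (H : set G) := closed H /\ is_subgroup H.
Definition open_subgroup (H : set G) := open H /\ is_subgroup H.

Variable p : nat.

(** Continuity of a map D -> F_p (F_p discrete) for the subspace topology on
    D : all fibres are relatively open in D. *)
Definition cont_on {X : topologicalType} (D : set X) (f : X -> 'F_p) : Prop :=
  forall a : 'F_p, exists U : set X, open U /\ U `&` D = D `&` f @^-1` [set a].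

(** H^1(H, F_p) = continuous homomorphisms H -> F_p. *)
Definition hom1 (H : set G) (f : G -> 'F_p) : Prop :=
  cont_on H f /\ forall x y, H x -> H y -> f (x * y)%pg = f x + f y.

Definition cocycle2 (H : set G) (c : G -> G -> 'F_p) : Prop :=
  cont_on (H `*` H) (fun xy : G * G => c xy.1 xy.2) /\
  forall x y z, H x -> H y -> H z ->
    c y z - c (x * y)%pg z + c x (y * z)%pg - c x y = 0.
Definition coboundary2 (H : set G) (c : G -> G -> 'F_p) : Prop :=
  exists f : G -> 'F_p, cont_on H f /\
    forall x y, H x -> H y -> c x y = f y - f (x * y)%pg + f x.

Definition cup1 (chi psi : G -> 'F_p) : G -> G -> 'F_p :=
  fun x y => chi x * psi y.

Definition kerH (H : set G) (chi : G -> 'F_p) : set G :=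
  [set g | H g /\ chi g = 0].

Fixpoint pgpow (t : G) (n : nat) : G :=
  if n is n'.+1 then (t * pgpow t n')%pg else pg_one G.

(** Corestriction H^1(ker chi) -> H^1(H) (trivial coefficients): composition
    with the transfer H -> (ker chi)^ab, computed with the transversal
    {t^i | 0 <= i < p} where chi t = 1; the identity when chi = 0 on H. *)
Definition cor1 (H : set G) (chi phi : G -> 'F_p) (g : G) : 'F_p :=
  if pselect (exists x, H x /\ chi x <> 0) then
    let t := xget (pg_one G) [set x | H x /\ chi x = 1] in
    \sum_(i < p)
      phi (pgpow t i * g * pg_inv (pgpow t ((i + nat_of_ord (chi g)) %% p)))%pg
  else phi g.

(** The cup product exact sequence property for the closed subgroup H
    (with its subspace topology), exactness at H^1 and at H^2. *)
Definition cup_exact (H : set G) : Prop :=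
  forall chi, hom1 H chi ->
    (forall psi, hom1 H psi ->
       (coboundary2 H (cup1 chi psi) <->
        exists phi, hom1 (kerH H chi) phi /\ forall g, H g -> psi g = cor1 H chi phi g))
    /\
    (forall c, cocycle2 H c ->
       (coboundary2 (kerH H chi) c <->
        exists psi, hom1 H psi /\
          coboundary2 H (fun x y => c x y - cup1 chi psi x y))).
End Defs.

From mathcomp Require Import all_boot all_algebra.
From mathcomp Require Import boolp classical_sets topology.
Set Implicit Arguments. Unset Strict Implicit. Unset Printing Implicit Defensive.
Import GRing.Theory.
Local Open Scope classical_set_scope.

(* Continuous cochains on a closed subgroup H of a profinite group are locally
   constant, so by compactness the finitely many cochains occurring in one
   exactness statement are all constant on the cosets of a single open normal
   subgroup N; such N are arbitrarily small because a compact Hausdorff totally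
   disconnected space is zero-dimensional.  Choosing in H a representative of
   each coset xN extends these cochains to the open subgroup U = HN.  The kernel
   of the extended character is (ker chi)N, and the corestriction computed with a
   transversal {t^i} chosen inside H agrees on H with the one of U.  Applying the
   exact sequence of U and restricting back to H gives the one of H. *)

Lemma open_mem_nbhs (T : topologicalType) (S : set T) x : open S -> S x -> nbhs x S.
Proof. by move=> oS Sx; apply: open_nbhs_nbhs. Qed.

Lemma open_from_nbhs (T : topologicalType) (S : set T) :
  (forall x, S x -> nbhs x S) -> open S.
Proof. by rewrite openE. Qed.

Lemma nbhs_pair_split (T U : topologicalType) (a : T) (b : U) (P : set (T * U)) :
  nbhs (a, b) P -> exists A B, [/\ nbhs a A, nbhs b B &
    forall u v, A u -> B v -> P (u, v)].
Proof.
case=> [[A B] /= [nA nB] sAB]; exists A, B; split => // u v Au Bv.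
exact: (sAB (u, v)).
Qed.

Lemma open_setX (T U : topologicalType) (P : set T) (Q : set U) :
  open P -> open Q -> open (P `*` Q).
Proof.
move=> oP oQ; apply: open_from_nbhs => -[u v] [Pu Qv].
by exists (P, Q) => //; split; apply: open_mem_nbhs.
Qed.

Lemma compact_near_uniform (X : topologicalType) (I : Type) (F : set_system I)
    (K : set X) (P : I -> X -> Prop) : Filter F -> compact K ->
  (forall x, K x -> exists2 A, nbhs x A &
     exists2 B, F B & forall x' i, A x' -> B i -> P i x') ->
  F [set i | forall x, K x -> P i x].
Proof.
move=> FF /compact_near_coveringP cK loc; apply: cK => x /loc [A Ax [B FB AB]].
by exists (A, B) => // -[x' i] [/= Ax' Bi]; exact: AB.
Qed.

Section ProfiniteGroup.
Variable G : profinite_group.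
Local Notation "x ** y" := (pg_mul x y) (at level 40, left associativity).
Local Notation one := (pg_one G).
Implicit Types x y : G.

Lemma pg_mulgV x : x ** pg_inv x = one.
Proof.
rewrite -[x ** _]pg_mul1g -{1}(pg_mulVg (pg_inv x)) -pg_mulA.
by rewrite (pg_mulA (pg_inv x)) pg_mulVg pg_mul1g pg_mulVg.
Qed.

Lemma pg_mulg1 x : x ** one = x.
Proof. by rewrite -(pg_mulVg x) pg_mulA pg_mulgV pg_mul1g. Qed.

Lemma pg_mulKg x y : pg_inv x ** (x ** y) = y.
Proof. by rewrite pg_mulA pg_mulVg pg_mul1g. Qed.

Lemma pg_mulKVg x y : x ** (pg_inv x ** y) = y.
Proof. by rewrite pg_mulA pg_mulgV pg_mul1g. Qed.

Lemma pg_mulgK x y : x ** y ** pg_inv y = x.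
Proof. by rewrite -pg_mulA pg_mulgV pg_mulg1. Qed.

Lemma pg_mulgKV x y : x ** pg_inv y ** y = x.
Proof. by rewrite -pg_mulA pg_mulVg pg_mulg1. Qed.

Lemma pg_invgK x : pg_inv (pg_inv x) = x.
Proof. by rewrite -[LHS]pg_mulg1 -(pg_mulVg x) pg_mulKg. Qed.

Lemma pg_invMg x y : pg_inv (x ** y) = pg_inv y ** pg_inv x.
Proof.
have xyK : x ** y ** (pg_inv y ** pg_inv x) = one.
  by rewrite pg_mulA pg_mulgK pg_mulgV.
by rewrite -[LHS]pg_mulg1 -xyK pg_mulKg.
Qed.

Lemma pg_invg1 : pg_inv one = one.
Proof. by rewrite -[pg_inv one]pg_mulg1 pg_mulVg. Qed.

Section Subgroup.
Variable S : set G.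
Hypothesis sS : is_subgroup S.

Lemma subgroup1 : S one. Proof. by case: sS. Qed.

Lemma subgroupM x y : S x -> S y -> S (x ** y).
Proof. by case: sS => _ [mulS _]; apply: mulS. Qed.

Lemma subgroupV x : S x -> S (pg_inv x).
Proof. by case: sS => _ [_ invS]; apply: invS. Qed.

End Subgroup.

Lemma nbhs_mul x y W : nbhs (x ** y) W -> exists A B, [/\ nbhs x A, nbhs y B &
  forall a b, A a -> B b -> W (a ** b)].
Proof. by move=> /(@pg_mul_cont G (x, y)) /nbhs_pair_split. Qed.

Lemma nbhs_lmul a x W : nbhs (a ** x) W -> nbhs x [set y | W (a ** y)].
Proof.
move=> /nbhs_mul [A [B [nA nB sAB]]]; apply: filterS nB => b Bb.
by apply: sAB => //; exact: nbhs_singleton.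
Qed.

Lemma nbhs_rmul a x W : nbhs (x ** a) W -> nbhs x [set y | W (y ** a)].
Proof.
move=> /nbhs_mul [A [B [nA nB sAB]]]; apply: filterS nA => b Bb.
by apply: sAB => //; exact: nbhs_singleton.
Qed.

Lemma nbhs_inv x W : nbhs (pg_inv x) W -> nbhs x [set y | W (pg_inv y)].
Proof. exact: (@pg_inv_cont G x). Qed.

(** * Zero-dimensionality *)

Definition quasicomponent1 : set G := [set x | forall C, clopen C -> C one -> C x].

Lemma closed_quasicomponent1 : closed quasicomponent1.
Proof.
move=> x clx C cC C1; apply: contrapT => nCx.
have nCx' : nbhs x (~` C) by apply: open_mem_nbhs => //; apply: closed_openC; case: cC.
by have [y [Qy nCy]] := clx _ nCx'; apply: nCy; exact: Qy.
Qed.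

Lemma clopen1_avoid (K : set G) : closed K ->
  (forall x, K x -> ~ quasicomponent1 x) ->
  exists C, [/\ clopen C, C one & forall x, C x -> ~ K x].
Proof.
move=> clK KnQ; pose F := filter_from [set C : set G | clopen C /\ C one] id.
have FF : Filter F.
  apply: filter_from_filter; first by exists setT; split=> //; exact: clopenT.
  move=> C1 C2 [cC1 C11] [cC2 C21]; exists (C1 `&` C2) => //.
  by split; first exact: clopenI.
have : F [set y | forall x, K x -> y <> x].
  apply: compact_near_uniform; first exact: subclosed_compact clK (@pg_compact G) _.
  move=> x /KnQ /existsNP [C /not_implyP [cC /not_implyP [C1 nCx]]].
  exists (~` C); first by apply: open_mem_nbhs => //; apply: closed_openC; case: cC.
  by exists C => [|x' y nCx' Cy yx']; [exists C | rewrite -yx' in nCx'].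
by move=> [C [cC C1] CnK]; exists C; split=> // x Cx Kx; apply: (CnK x Cx x Kx).
Qed.

(* Separate A from B by disjoint open sets O and W; the compact complement of
   O `|` W misses the quasicomponent, hence some clopen neighbourhood C of one,
   and then C `&` O is clopen. *)
Lemma quasicomponent1_split (A B : set G) : closed A -> closed B ->
  A `&` B = set0 -> quasicomponent1 `<=` A `|` B -> A one ->
  quasicomponent1 `<=` A.
Proof.
move=> clA clB AB0 QAB A1.
have AnB : set_nbhs A (~` B).
  apply/set_nbhsP; exists (~` B); split => //; first exact: closed_openC.
  by move=> a Aa Ba; have : (A `&` B) a by []; rewrite AB0.
have [V AV clVnB] := compact_normal (@pg_hausdorff G) (@pg_compact G) clA AnB.
have [O [oO AO OV]] := (set_nbhsP _ _).1 AV.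
pose W := ~` closure V.
have oW : open W by apply: closed_openC; exact: closed_closure.
have BW : B `<=` W by move=> b Bb clVb; exact: clVnB b clVb Bb.
have OnW x : O x -> ~ W x by move=> Ox; apply; apply: subset_closure; exact: OV.
have clK : closed (~` (O `|` W)) by apply: open_closedC; exact: openU.
have [C [cC C1 CnK]] :
    exists C, [/\ clopen C, C one & forall x, C x -> ~ (~` (O `|` W)) x].
  apply: clopen1_avoid => // x nOWx /QAB [/AO|/BW] ?; apply: nOWx; by [left|right].
have cCO : clopen (C `&` O).
  split; first by apply: openI => //; case: cC.
  have -> : C `&` O = C `&` ~` W.
    apply/seteqP; split => x [Cx OWx]; split => //; first exact: OnW.
    by apply: contrapT => nOx; apply: (CnK x Cx) => -[].
  by apply: closedI; [case: cC | exact: open_closedC].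
move=> x Qx; have [_ Ox] := Qx _ cCO (conj C1 (AO _ A1)).
by case: (QAB x Qx) => // /BW /(OnW _ Ox).
Qed.

Lemma connected_quasicomponent1 : connected quasicomponent1.
Proof.
move=> B [b Bb] [O oO BQO] [Cl clCl BQCl].
have QB y : B y -> quasicomponent1 y by rewrite BQO => -[].
have OB y : B y -> O y by rewrite BQO => -[].
have clQCl : closed (quasicomponent1 `&` Cl).
  by apply: closedI => //; exact: closed_quasicomponent1.
have clQnO : closed (quasicomponent1 `&` ~` O).
  by apply: closedI; [exact: closed_quasicomponent1 | exact: open_closedC].
have disj : (quasicomponent1 `&` Cl) `&` (quasicomponent1 `&` ~` O) = set0.
  apply/seteqP; split => // y [[Qy Cly] [_ nOy]]; apply: nOy; apply: OB.
  by rewrite BQCl.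
have cov : quasicomponent1 `<=` (quasicomponent1 `&` Cl) `|` (quasicomponent1 `&` ~` O).
  move=> y Qy; have [Oy|nOy] := pselect (O y); last by right.
  by left; rewrite -BQCl BQO.
have [B1|nB1] := pselect (B one).
  have QCl1 : (quasicomponent1 `&` Cl) one by rewrite -BQCl.
  apply/seteqP; split => y; first exact: QB.
  by move=> /(quasicomponent1_split clQCl clQnO disj cov QCl1); rewrite -BQCl.
have QnO1 : (quasicomponent1 `&` ~` O) one.
  by split=> [C _ //|O1]; apply: nB1; rewrite BQO; split=> // C _.
rewrite setUC in cov.
have [_ nOb] :=
  quasicomponent1_split clQnO clQCl (etrans (setIC _ _) disj) cov QnO1 (QB b Bb).
by case: (nOb (OB b Bb)).
Qed.

Lemma quasicomponent1_sub1 : quasicomponent1 `<=` [set one].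
Proof.
rewrite -(@pg_tot_disc G one I).
exact: connected_component_max connected_quasicomponent1.
Qed.

Lemma clopen_nbhs1 W : nbhs one W -> exists C, [/\ clopen C, C one & C `<=` W].
Proof.
move=> W1; have clK : closed (~` W°) by apply: open_closedC; exact: open_interior.
have [C [cC C1 CnK]] : exists C, [/\ clopen C, C one & forall x, C x -> ~ (~` W°) x].
  apply: clopen1_avoid => // x nWx /quasicomponent1_sub1 /= x1.
  by apply: nWx; rewrite x1.
by exists C; split => // x /CnK Wx; apply: interior_subset; exact: contrapT.
Qed.

(** * Open normal subgroups *)

Inductive mul_closure (V : set G) : G -> Prop :=
| mul_closure1 : mul_closure V one
| mul_closureMr x v : mul_closure V x -> V v -> mul_closure V (x ** v).

Lemma mul_closureM V x y : mul_closure V x -> mul_closure V y -> mul_closure V (x ** y).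
Proof.
move=> Vx; elim=> [|y' v _ Vxy' Vv]; first by rewrite pg_mulg1.
by rewrite pg_mulA; apply: mul_closureMr.
Qed.

Lemma mul_closure_subgroup V : (forall v, V v -> V (pg_inv v)) ->
  is_subgroup (mul_closure V).
Proof.
move=> VV; split; first exact: mul_closure1.
split=> [x y|x]; first exact: mul_closureM.
elim=> [|y v _ Vy Vv]; first by rewrite pg_invg1; exact: mul_closure1.
rewrite pg_invMg -[pg_inv v]pg_mul1g; apply: mul_closureM => //.
by apply: mul_closureMr; [exact: mul_closure1 | exact: VV].
Qed.

Lemma subgroup_nbhs1_open (S : set G) : is_subgroup S -> nbhs one S -> open S.
Proof.
move=> sS S1; apply: open_from_nbhs => x Sx.
have : nbhs (pg_inv x ** x) S by rewrite pg_mulVg.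
move=> /nbhs_lmul; apply: filterS => y Sxy.
by rewrite -(pg_mulKVg x y); apply: subgroupM.
Qed.

(* Compactness of C gives a neighbourhood V of one with C V included in C; the
   subgroup generated by V `&` V^-1 is then open and contained in C. *)
Lemma open_subgroup_in_clopen C : clopen C -> C one ->
  exists S, [/\ open S, is_subgroup S & S `<=` C].
Proof.
move=> [oC clC] C1.
have [V V1 CVC] : exists2 V, nbhs one V & forall a v, C a -> V v -> C (a ** v).
  have : nbhs one [set v | forall a, C a -> C (a ** v)].
    apply: compact_near_uniform; first exact: subclosed_compact clC (@pg_compact G) _.
    move=> x Cx; have : nbhs (x ** one) C by rewrite pg_mulg1; exact: open_mem_nbhs.
    by move=> /nbhs_mul [A [B [nA nB AB]]]; exists A => //; exists B.
  by move=> CV; exists [set v | forall a, C a -> C (a ** v)] => // a v Ca; apply.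
pose V' := V `&` [set v | V (pg_inv v)].
have V'1 : nbhs one V' by apply: filterI => //; apply: nbhs_inv; rewrite pg_invg1.
have sV' : is_subgroup (mul_closure V').
  by apply: mul_closure_subgroup => v [Vv VVv]; split => //=; rewrite pg_invgK.
exists (mul_closure V'); split => //.
  apply: subgroup_nbhs1_open => //; apply: filterS V'1 => v V'v.
  by rewrite -[v]pg_mul1g; apply: mul_closureMr => //; exact: mul_closure1.
by move=> w; elim=> [|x v _ Cx [Vv _]] //; exact: CVC.
Qed.

Definition open_normal (N : set G) :=
  [/\ open N, is_subgroup N & forall g x, N x -> N (pg_inv g ** x ** g)].

Lemma open_normalT : open_normal [set: G].
Proof. by split => //; exact: openT. Qed.

Lemma open_normalI (N1 N2 : set G) :
  open_normal N1 -> open_normal N2 -> open_normal (N1 `&` N2).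
Proof.
move=> [o1 s1 n1] [o2 s2 n2]; split; first exact: openI.
  split; first by split; exact: subgroup1.
  by split=> [x y [? ?] [? ?]|x [? ?]]; split; apply: subgroupM || apply: subgroupV.
by move=> g x [? ?]; split; [exact: n1|exact: n2].
Qed.

(* The intersection of all conjugates of S, a neighbourhood of one by
   compactness of G. *)
Lemma open_normal_in_open_subgroup S : open S -> is_subgroup S ->
  exists N, open_normal N /\ N `<=` S.
Proof.
move=> oS sS; pose N := [set x | forall g, S (pg_inv g ** x ** g)].
have conjM g x y : pg_inv g ** (x ** y) ** g =
    (pg_inv g ** x ** g) ** (pg_inv g ** y ** g).
  by rewrite !pg_mulA pg_mulgK.
have conjJ g h x : pg_inv g ** (pg_inv h ** x ** h) ** g =
    pg_inv (h ** g) ** x ** (h ** g).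
  by rewrite pg_invMg !pg_mulA.
have sN : is_subgroup N.
  split; first by move=> g; rewrite pg_mulg1 pg_mulVg; exact: subgroup1.
  split=> [x y Nx Ny g|x Nx g]; first by rewrite conjM; apply: subgroupM.
  have -> : pg_inv g ** pg_inv x ** g = pg_inv (pg_inv g ** x ** g).
    by rewrite !pg_invMg pg_invgK pg_mulA.
  exact: subgroupV.
exists N; split; last by move=> x /(_ one); rewrite pg_invg1 pg_mul1g pg_mulg1.
split=> //; last by move=> h x Nx g; rewrite conjJ.
apply: subgroup_nbhs1_open => //.
have : nbhs one [set v | forall g, [set: G] g -> S (pg_inv g ** v ** g)].
  apply: compact_near_uniform => [|g _]; first exact: pg_compact.
  exists [set g' | S (pg_inv g ** g')].
    by apply: nbhs_lmul; rewrite pg_mulVg; apply: open_mem_nbhs => //; exact: subgroup1.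
  exists [set v | S (pg_inv g ** v ** g)].
    have : nbhs (pg_inv g ** one ** g) S.
      by rewrite pg_mulg1 pg_mulVg; apply: open_mem_nbhs => //; exact: subgroup1.
    by move=> /nbhs_rmul /nbhs_lmul.
  move=> g' v /= Sgg' Sv; rewrite -(pg_mulKVg g g') -conjJ.
  exact: subgroupM (subgroupM _ (subgroupV _ Sgg') Sv) Sgg'.
by apply: filterS => v Sv g; exact: Sv.
Qed.

Lemma open_normal_basis W : nbhs one W -> exists N, open_normal N /\ N `<=` W.
Proof.
move=> /clopen_nbhs1 [C [cC C1 CW]].
have [S [oS sS SC]] := open_subgroup_in_clopen cC C1.
have [N [nN NS]] := open_normal_in_open_subgroup oS sS.
by exists N; split => // x /NS /SC /CW.
Qed.

Definition small_open_normal : set_system (set G) :=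
  filter_from open_normal (fun N => [set M | open_normal M /\ M `<=` N]).

#[global] Instance small_open_normal_filter : Filter small_open_normal.
Proof.
apply: filter_from_filter; first by exists setT; exact: open_normalT.
move=> N1 N2 nN1 nN2; exists (N1 `&` N2); first exact: open_normalI.
by move=> M [nM MN]; split; split=> // x /MN [].
Qed.

Lemma small_open_normalP (P : set G -> Prop) :
  small_open_normal P -> exists N, open_normal N /\ P N.
Proof. by move=> [N nN NP]; exists N; split => //; apply: NP; split. Qed.

End ProfiniteGroup.

(** * Locally constant cochains *)

Section LocallyConstant.
Variable p : nat.

Lemma cont_on_fibre (X : topologicalType) (D U : set X) (f : X -> 'F_p) a x :
  U `&` D = D `&` f @^-1` [set a] -> D x -> U x <-> f x = a.
Proof.
move=> eU Dx; split=> [Ux|fx].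
  by have : (U `&` D) x by []; rewrite eU => -[].
by have : (D `&` f @^-1` [set a]) x by []; rewrite -eU => -[].
Qed.

Lemma cont_onS (X : topologicalType) (D E : set X) (f : X -> 'F_p) :
  E `<=` D -> cont_on D f -> cont_on E f.
Proof.
move=> ED cf a; have [U [oU eU]] := cf a; exists U; split => //.
by apply/seteqP; split=> x [] => [Ux Ex|Ex fx]; split=> //;
  apply/(cont_on_fibre eU (ED _ Ex)).
Qed.

Lemma cont_on_fst (X : topologicalType) (D : set X) (f : X -> 'F_p) :
  cont_on D f -> cont_on (D `*` D) (fun xy : X * X => f xy.1).
Proof.
move=> cf a; have [U [oU eU]] := cf a.
exists (U `*` setT); split; first by apply: open_setX => //; exact: openT.
apply/seteqP; split=> -[x y] /=.
  by move=> [[Ux _] [Dx Dy]]; split=> //; apply/(cont_on_fibre eU Dx).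
by move=> [[Dx Dy] fx]; split=> //; split=> //; apply/(cont_on_fibre eU Dx).
Qed.

Lemma closed_cont_on_fibre (X : topologicalType) (D : set X) (f : X -> 'F_p) a :
  closed D -> cont_on D f -> closed (D `&` f @^-1` [set a]).
Proof.
move=> clD cf; rewrite -[_ `&` _]setCK closedC; apply: open_from_nbhs => x nKx.
have [Dx|nDx] := pselect (D x); last first.
  by apply: filterS (open_mem_nbhs (closed_openC clD) nDx) => y nDy [].
have [U [oU eU]] := cf (f x).
have Ux : U x by apply/(cont_on_fibre eU Dx).
apply: filterS (open_mem_nbhs oU Ux) => y Uy [Dy fy]; apply: nKx; split=> //.
by rewrite -fy; symmetry; apply/(cont_on_fibre eU Dy).
Qed.

End LocallyConstant.

Section CosetConstant.
Variable G : profinite_group.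
Local Notation "x ** y" := (pg_mul x y) (at level 40, left associativity).
Local Notation one := (pg_one G).
Implicit Types (x y : G) (D N : set G).

Definition coset_const D N (T : Type) (f : G -> T) :=
  forall x y, D x -> D y -> N (pg_inv x ** y) -> f y = f x.

Definition coset_const2 D N (T : Type) (c : G -> G -> T) :=
  forall x1 x2 y1 y2, D x1 -> D x2 -> D y1 -> D y2 ->
    N (pg_inv x1 ** y1) -> N (pg_inv x2 ** y2) -> c y1 y2 = c x1 x2.

Variable p : nat.

Lemma coset_const2_near D (c : G -> G -> 'F_p) : closed D ->
  cont_on (D `*` D) (fun xy : G * G => c xy.1 xy.2) ->
  small_open_normal [set N | coset_const2 D N c].
Proof.
move=> clD cc.
have : small_open_normal [set N | forall xy, (D `*` D) xy -> D xy.1 -> D xy.2 ->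
    forall u v, D u -> D v -> N (pg_inv xy.1 ** u) -> N (pg_inv xy.2 ** v) ->
    c u v = c xy.1 xy.2].
  apply: compact_near_uniform => [|[x y] [Dx Dy]].
    by apply: compact_setX; exact: subclosed_compact clD (@pg_compact G) _.
  have [U [oU eU]] := cc (c x y).
  have Uc u v : D u -> D v -> U (u, v) -> c u v = c x y.
    by move=> Du Dv /(cont_on_fibre (x := (u, v)) eU (conj Du Dv)).
  have Uxy : U (x, y) by apply/(cont_on_fibre (x := (x, y)) eU (conj Dx Dy)).
  have [A [B [nA nB sAB]]] := nbhs_pair_split (open_mem_nbhs oU Uxy).
  have : nbhs (x ** one) A by rewrite pg_mulg1.
  move=> /nbhs_mul [A1 [B1 [nA1 nB1 sAB1]]].
  have : nbhs (y ** one) B by rewrite pg_mulg1.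
  move=> /nbhs_mul [A2 [B2 [nA2 nB2 sAB2]]].
  have [N [nN NB]] := open_normal_basis (filterI nB1 nB2).
  exists (A1 `*` A2); first by exists (A1, A2).
  exists [set M | open_normal M /\ M `<=` N]; first by exists N.
  move=> [u v] M [/= Au Av] [nM MN] /= Du Dv u' v' Du' Dv' /MN/NB [Bu _] /MN/NB [_ Bv].
  rewrite (Uc _ _ Du' Dv'); last first.
    rewrite -(pg_mulKVg u u') -(pg_mulKVg v v').
    by apply: sAB; [exact: sAB1 | exact: sAB2].
  have [B11 B21] : B1 one /\ B2 one by split; exact: nbhs_singleton.
  by rewrite (Uc _ _ Du Dv) // -[u]pg_mulg1 -[v]pg_mulg1; apply: sAB;
    [apply: sAB1 | apply: sAB2].
by apply: filterS => N cN x1 x2 y1 y2 Dx1 Dx2; apply: (cN (x1, x2)).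
Qed.

Lemma coset_const_near D (f : G -> 'F_p) : closed D -> cont_on D f ->
  small_open_normal [set N | coset_const D N f].
Proof.
move=> clD /cont_on_fst cf.
apply: filterS (coset_const2_near (c := fun x _ => f x) clD cf) => N cN x y Dx Dy Nxy.
exact: (cN x x y y Dx Dx Dy Dy Nxy Nxy).
Qed.

End CosetConstant.

(** * Extension from H to HN *)

Local Open Scope ring_scope.

Section Saturation.
Variable G : profinite_group.
Local Notation "x ** y" := (pg_mul x y) (at level 40, left associativity).
Local Notation one := (pg_one G).
Implicit Types (x y : G) (D : set G).

Variable N : set G.
Hypothesis nN : open_normal N.
Local Notation "x ~N y" := (N (pg_inv x ** y)) (at level 70).

Let sN : is_subgroup N. Proof. by case: nN. Qed.

Lemma congr_refl x : x ~N x.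
Proof. by rewrite pg_mulVg; exact: subgroup1. Qed.

Lemma congr_sym x y : x ~N y -> y ~N x.
Proof. by move=> /(subgroupV sN); rewrite pg_invMg pg_invgK. Qed.

Lemma congr_trans x y z : x ~N y -> y ~N z -> x ~N z.
Proof.
move=> Nxy Nyz; rewrite -(pg_mulKVg y z) pg_mulA.
exact: subgroupM.
Qed.

Lemma congr_mulN x n : N n -> x ~N x ** n.
Proof. by rewrite pg_mulKg. Qed.

Lemma congrM a b x y : a ~N x -> b ~N y -> a ** b ~N x ** y.
Proof.
move=> Nax Nby; case: nN => _ _ normalN.
have -> : pg_inv (a ** b) ** (x ** y) =
    pg_inv b ** (pg_inv a ** x) ** b ** (pg_inv b ** y).
  by rewrite pg_invMg !pg_mulA pg_mulgK.
by apply: subgroupM => //; exact: normalN.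
Qed.

Lemma congr_mul2 a b x y : x ~N y -> a ** x ** b ~N a ** y ** b.
Proof.
by move=> Nxy; apply: congrM (congr_refl b); exact: congrM (congr_refl a) Nxy.
Qed.

Lemma nbhs_congr x : nbhs x [set y | x ~N y].
Proof.
apply: nbhs_lmul; rewrite pg_mulVg; apply: open_mem_nbhs; first by case: nN.
exact: subgroup1.
Qed.

Definition saturate D := [set x | exists2 h, D h & h ~N x].
(* [rep D x] is [one] when the coset of x does not meet D. *)
Definition rep D x := xget one [set h | D h /\ h ~N x].
Definition ext D (T : Type) (f : G -> T) x := f (rep D x).
Definition ext2 D (T : Type) (c : G -> G -> T) x y := c (rep D x) (rep D y).

Lemma sub_saturate {D} : D `<=` saturate D.
Proof. by move=> x Dx; exists x => //; exact: congr_refl. Qed.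

Lemma saturate_open_subgroup D : is_subgroup D -> open_subgroup (saturate D).
Proof.
move=> sD; split.
  apply: open_from_nbhs => x [h Dh Nhx]; apply: filterS (nbhs_congr x) => y Nxy.
  by exists h => //; exact: congr_trans Nxy.
split; first by exists one; [exact: subgroup1 | exact: congr_refl].
split=> [x y [a Da Nax] [b Db Nby]|x [h Dh Nhx]].
  by exists (a ** b); [exact: subgroupM | exact: congrM].
exists (pg_inv h); first exact: subgroupV.
case: nN => _ _ /(_ (pg_inv x) _ (congr_sym Nhx)).
by rewrite !pg_invgK pg_mulKVg.
Qed.

Lemma repP D x : saturate D x -> D (rep D x) /\ rep D x ~N x.
Proof.
by move=> [h Dh Nhx]; apply: (@xgetPex _ one [set h | D h /\ h ~N x]); exists h.
Qed.

Lemma rep_mulN D x n : N n -> rep D (x ** n) = rep D x.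
Proof.
move=> Nn; rewrite /rep; congr xget; apply/seteqP; split=> h [Dh Nh]; split=> //.
  exact: congr_trans Nh (congr_sym (congr_mulN x Nn)).
exact: congr_trans Nh (congr_mulN x Nn).
Qed.

Lemma ext_congr D (T : Type) (f : G -> T) x y :
  coset_const D N f -> D x -> x ~N y -> ext D f y = f x.
Proof.
move=> fN Dx Nxy; have [Dr Nr] := repP (ex_intro2 _ _ x Dx Nxy).
exact: fN _ _ Dx Dr (congr_trans Nxy (congr_sym Nr)).
Qed.

Lemma extE D (T : Type) (f : G -> T) x : coset_const D N f -> D x -> ext D f x = f x.
Proof. by move=> fN Dx; apply: ext_congr => //; exact: congr_refl. Qed.

Lemma ext_mul D (T : Type) (f : G -> T) x y : is_subgroup D -> coset_const D N f ->
  saturate D x -> saturate D y -> ext D f (x ** y) = f (rep D x ** rep D y).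
Proof.
move=> sD fN Dx Dy; have [Drx Nx] := repP Dx; have [Dry Ny] := repP Dy.
by apply: ext_congr fN _ (congrM Nx Ny); exact: subgroupM.
Qed.

Lemma ext2_congr D (T : Type) (c : G -> G -> T) x1 x2 y1 y2 :
  coset_const2 D N c -> D x1 -> D x2 -> x1 ~N y1 -> x2 ~N y2 ->
  ext2 D c y1 y2 = c x1 x2.
Proof.
move=> cN Dx1 Dx2 N1 N2.
have [Dr1 Nr1] := repP (ex_intro2 _ _ x1 Dx1 N1).
have [Dr2 Nr2] := repP (ex_intro2 _ _ x2 Dx2 N2).
exact: cN _ _ _ _ Dx1 Dx2 Dr1 Dr2 (congr_trans N1 (congr_sym Nr1))
  (congr_trans N2 (congr_sym Nr2)).
Qed.

Lemma ext2E D (T : Type) (c : G -> G -> T) x y :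
  coset_const2 D N c -> D x -> D y -> ext2 D c x y = c x y.
Proof. by move=> cN Dx Dy; apply: ext2_congr => //; exact: congr_refl. Qed.

Variable p : nat.

Lemma cont_on_ext D E (f : G -> 'F_p) : cont_on E (ext D f).
Proof.
move=> a; exists (ext D f @^-1` [set a]); split; last by rewrite setIC.
apply: open_from_nbhs => x fx; apply: filterS (nbhs_congr x) => y Nxy.
by rewrite -(pg_mulKVg x y) /= /ext rep_mulN.
Qed.

Lemma cont_on_ext2 D E (c : G -> G -> 'F_p) :
  cont_on (E `*` E) (fun xy : G * G => ext2 D c xy.1 xy.2).
Proof.
move=> a; exists ((fun xy : G * G => ext2 D c xy.1 xy.2) @^-1` [set a]).
split; last by rewrite setIC.
apply: open_from_nbhs => -[x y] cxy.
exists ([set u | x ~N u], [set v | y ~N v]); first by split; exact: nbhs_congr.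
move=> [u v] [/= Nxu Nyv].
by rewrite -(pg_mulKVg x u) -(pg_mulKVg y v) /= /ext2 !rep_mulN.
Qed.

Lemma hom1_ext D (f : G -> 'F_p) : is_subgroup D -> coset_const D N f ->
  hom1 D f -> hom1 (saturate D) (ext D f).
Proof.
move=> sD fN [_ fD]; split=> [|x y Dx Dy]; first exact: cont_on_ext.
by rewrite ext_mul // fD //; [case: (repP Dx) | case: (repP Dy)].
Qed.

Lemma cocycle2_ext D (c : G -> G -> 'F_p) : is_subgroup D -> coset_const2 D N c ->
  cocycle2 D c -> cocycle2 (saturate D) (ext2 D c).
Proof.
move=> sD cN [_ cD]; split=> [|x y z Dx Dy Dz]; first exact: cont_on_ext2.
have [Drx Nx] := repP Dx; have [Dry Ny] := repP Dy; have [Drz Nz] := repP Dz.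
rewrite (ext2_congr cN (subgroupM sD Drx Dry) Drz (congrM Nx Ny) Nz).
rewrite (ext2_congr cN Drx (subgroupM sD Dry Drz) Nx (congrM Ny Nz)).
exact: cD.
Qed.

Lemma coboundary2_ext D (c : G -> G -> 'F_p) (f : G -> 'F_p) :
  is_subgroup D -> coset_const D N f ->
  (forall x y, D x -> D y -> c x y = f y - f (x ** y) + f x) ->
  coboundary2 (saturate D) (ext2 D c).
Proof.
move=> sD fN cf; exists (ext D f); split=> [|x y Dx Dy]; first exact: cont_on_ext.
rewrite ext_mul //; apply: cf; [by case: (repP Dx) | by case: (repP Dy)].
Qed.

Lemma ext2_sub D E (T : Type) (c : G -> G -> T) x y : D `<=` E ->
  coset_const2 E N c -> saturate D x -> saturate D y -> ext2 D c x y = ext2 E c x y.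
Proof.
move=> DE cN Dx Dy; have [Drx Nx] := repP Dx; have [Dry Ny] := repP Dy.
by rewrite (ext2_congr cN (DE _ Drx) (DE _ Dry) Nx Ny).
Qed.

End Saturation.

Section Cochains.
Variable G : profinite_group.
Local Notation "x ** y" := (pg_mul x y) (at level 40, left associativity).
Local Notation one := (pg_one G).
Implicit Types (x y : G) (D E S : set G).
Variable p : nat.

Lemma hom1S D E (f : G -> 'F_p) : E `<=` D -> hom1 D f -> hom1 E f.
Proof.
move=> ED [fD homf]; split=> [|x y Ex Ey]; first exact: cont_onS fD.
by apply: homf; apply: ED.
Qed.

Lemma coboundary2_restrict D E (c c' : G -> G -> 'F_p) : E `<=` D ->
  (forall x y, E x -> E y -> c x y = c' x y) ->
  coboundary2 D c -> coboundary2 E c'.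
Proof.
move=> ED cc' [f [fD cf]]; exists f; split=> [|x y Ex Ey]; first exact: cont_onS fD.
by rewrite -cc' // cf //; apply: ED.
Qed.

Lemma res_coboundary_of_cup1 S (chi psi : G -> 'F_p) (c : G -> G -> 'F_p) :
  coboundary2 S (fun x y => c x y - cup1 chi psi x y) -> coboundary2 (kerH S chi) c.
Proof.
apply: coboundary2_restrict => [x []//|x y [_ chix] _].
by rewrite /cup1 chix mul0r subr0.
Qed.

Definition hom_on S (f : G -> 'F_p) :=
  forall x y, S x -> S y -> f (x ** y) = f x + f y.

Section HomOn.
Variables (S : set G) (f : G -> 'F_p).
Hypotheses (sS : is_subgroup S) (fS : hom_on S f).

Lemma hom_on1 : f one = 0.
Proof.
by apply: (@addrI _ (f one)); rewrite addr0 -fS ?pg_mulg1 //; exact: subgroup1.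
Qed.

Lemma hom_onV x : S x -> f (pg_inv x) = - f x.
Proof.
move=> Sx; apply/eqP; rewrite -addr_eq0 -fS ?pg_mulVg ?hom_on1 //.
exact: subgroupV.
Qed.

Lemma subgroup_pgpow t i : S t -> S (pgpow t i).
Proof. by move=> St; elim: i => [|i Sti] /=; [exact: subgroup1 | exact: subgroupM]. Qed.

Lemma hom_on_pgpow t i : S t -> f (pgpow t i) = f t *+ i.
Proof.
move=> St; elim: i => [|i fti] /=; first exact: hom_on1.
by rewrite fS ?fti ?mulrS //; exact: subgroup_pgpow.
Qed.

Lemma kerH_subgroup : is_subgroup (kerH S f).
Proof.
split; first by split; [exact: subgroup1 | exact: hom_on1].
split=> [x y [Sx fx] [Sy fy]|x [Sx fx]]; split.
- exact: subgroupM.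
- by rewrite fS // fx fy addr0.
- exact: subgroupV.
- by rewrite hom_onV // fx oppr0.
Qed.

Lemma hom_on_Fp_cases :
  (exists t, S t /\ f t = 1) \/ (forall x, S x -> f x = 0).
Proof.
have [[x [Sx fx]]|f0] := pselect (exists x, S x /\ f x <> 0); last first.
  by right => x Sx; apply: contrapT => fx; apply: f0; exists x.
left; exists (pgpow x (f x)^-1); split; first exact: subgroup_pgpow.
by rewrite hom_on_pgpow // -mulr_natr natr_Zp mulfV //; apply/eqP.
Qed.

End HomOn.
End Cochains.

(** * Corestriction *)

Lemma sum_mod_shift (R : nmodType) (F : nat -> R) n c : (0 < n)%N ->
  \sum_(i < n) F ((i + c) %% n)%N = \sum_(i < n) F i.
Proof.
move=> n_gt0; pose h (i : 'I_n) : 'I_n := Ordinal (ltn_pmod (i + c) n_gt0).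
have h_inj : injective h.
  move=> i j /(congr1 val) /= /eqP; rewrite eqn_modDr !modn_small // => /eqP ij.
  exact: val_inj.
by rewrite [RHS](reindex_inj h_inj).
Qed.

Section Corestriction.
Variable G : profinite_group.
Local Notation "x ** y" := (pg_mul x y) (at level 40, left associativity).
Local Notation one := (pg_one G).
Implicit Types (x y g t : G).
Variable p : nat.
Hypothesis p_prime : prime p.

Definition corsum (chi phi : G -> 'F_p) t g :=
  \sum_(i < p) phi (pgpow t i ** g ** pg_inv (pgpow t ((i + nat_of_ord (chi g)) %% p))).

Variables (S : set G) (chi phi : G -> 'F_p).
Hypotheses (sS : is_subgroup S) (chiS : hom_on S chi) (phiK : hom_on (kerH S chi) phi).

Lemma corsum_term_ker t g i : S t -> chi t = 1 -> S g ->
  kerH S chi (pgpow t i ** g ** pg_inv (pgpow t ((i + nat_of_ord (chi g)) %% p))).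
Proof.
move=> St chit Sg; have Sti := subgroup_pgpow sS i St.
have Stj := subgroup_pgpow sS ((i + nat_of_ord (chi g)) %% p) St.
split; first by apply: (subgroupM sS); [exact: subgroupM | exact: subgroupV].
rewrite chiS ?chiS ?(hom_onV sS chiS) ?(hom_on_pgpow sS chiS) //; last 2 first.
- exact: subgroupM.
- exact: subgroupV.
by rewrite chit Fp_nat_mod // natrD natr_Zp subrr.
Qed.

Lemma corsum_indep t s g : S t -> S s -> chi t = 1 -> chi s = 1 -> S g ->
  corsum chi phi s g = corsum chi phi t g.
Proof.
move=> St Ss chit chis Sg; rewrite /corsum; set c := nat_of_ord (chi g).
(* With a_i = s^i t^-i in the kernel, the i-th term for s is the i-th term for t
   multiplied by a_i on the left and by a_(i + c mod p)^-1 on the right; the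
   a's cancel after reindexing the sum. *)
pose a i := pgpow s i ** pg_inv (pgpow t i).
have Ka i : kerH S chi (a i).
  have Ssi := subgroup_pgpow sS i Ss; have Sti := subgroup_pgpow sS i St.
  split; first by apply: (subgroupM sS) => //; exact: subgroupV.
  rewrite /a chiS ?(hom_onV sS chiS) ?(hom_on_pgpow sS chiS) ?chit ?chis ?subrr //.
  exact: subgroupV.
have sK := kerH_subgroup sS chiS.
have term_s (i : 'I_p) :
  phi (pgpow s i ** g ** pg_inv (pgpow s ((i + c) %% p))) =
  phi (a i) + phi (pgpow t i ** g ** pg_inv (pgpow t ((i + c) %% p)))
   - phi (a ((i + c) %% p)%N).
  have -> : pgpow s i ** g ** pg_inv (pgpow s ((i + c) %% p)) =
      a i ** (pgpow t i ** g ** pg_inv (pgpow t ((i + c) %% p))) **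
      pg_inv (a ((i + c) %% p)%N).
    by rewrite /a pg_invMg pg_invgK !pg_mulA !pg_mulgKV.
  have Kti := corsum_term_ker i St chit Sg.
  have Kij := subgroupM sK (Ka i) Kti.
  have Kj1 := subgroupV sK (Ka ((i + c) %% p)%N).
  by rewrite phiK // phiK // (hom_onV sK phiK).
rewrite (eq_bigr _ (fun i _ => term_s i)) !big_split /= sumrN.
by rewrite (sum_mod_shift (fun i => phi (a i))) ?prime_gt0 // addrC addrA addNr add0r.
Qed.

Lemma cor1E t g : S t -> chi t = 1 -> S g -> cor1 S chi phi g = corsum chi phi t g.
Proof.
move=> St chit Sg; rewrite /cor1; case: pselect => [? | nz]; last first.
  by case: nz; exists t; rewrite chit; split=> //; apply/eqP; exact: oner_neq0.
have [Su chiu] :=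
  @xgetPex _ one [set x | S x /\ chi x = 1] (ex_intro _ t (conj St chit)).
exact: corsum_indep.
Qed.

Lemma cor1_hom0 g : (forall x, S x -> chi x = 0) -> cor1 S chi phi g = phi g.
Proof.
by move=> chi0; rewrite /cor1; case: pselect => // -[x [Sx []]]; exact: chi0.
Qed.

End Corestriction.

(** * Closed subgroups *)

Section ClosedSubgroup.
Variable G : profinite_group.
Local Notation "x ** y" := (pg_mul x y) (at level 40, left associativity).
Variable p : nat.
Hypothesis p_prime : prime p.
Variables (H : set G) (chi : G -> 'F_p).
Hypotheses (clH : closed H) (sH : is_subgroup H) (chiH : hom1 H chi).
Local Notation K := (kerH H chi).

Let sK : is_subgroup K. Proof. exact: kerH_subgroup sH chiH.2. Qed.
Let clK : closed K. Proof. exact: closed_cont_on_fibre clH chiH.1. Qed.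

Section OpenNormal.
Variable N : set G.
Hypotheses (nN : open_normal N) (chiN : coset_const H N chi).
Local Notation U := (saturate N H).
Local Notation chiU := (ext N H chi).

Let sU : is_subgroup U. Proof. by case: (saturate_open_subgroup nN sH). Qed.
Let chiU_hom : hom1 U chiU. Proof. exact: hom1_ext. Qed.

Lemma kerH_saturate : kerH U chiU `<=` saturate N K.
Proof. by move=> x [Ux chix]; have [Hr Nr] := repP Ux; exists (rep N H x). Qed.

Lemma sub_kerH_saturate : K `<=` kerH U chiU.
Proof. by move=> x [Hx chix]; split; [exact: sub_saturate | rewrite (extE nN)]. Qed.

Lemma saturate_hom0 : (forall x, H x -> chi x = 0) -> forall x, U x -> chiU x = 0.
Proof. by move=> chi0 x Ux; have [Hr _] := repP Ux; exact: chi0. Qed.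

Lemma cor1_saturate (phi : G -> 'F_p) g : hom_on (kerH U chiU) phi -> H g ->
  cor1 U chiU phi g = cor1 H chi phi g.
Proof.
move=> phiU Hg.
have phiK : hom_on K phi by move=> x y Kx Ky; apply: phiU; exact: sub_kerH_saturate.
have [[t [Ht chit]]|chi0] := hom_on_Fp_cases sH chiH.2; last first.
  by rewrite !cor1_hom0 //; exact: saturate_hom0.
have chiUt : chiU t = 1 by rewrite (extE nN).
rewrite (cor1E p_prime sU chiU_hom.2 phiU (sub_saturate nN Ht) chiUt
  (sub_saturate nN Hg)).
by rewrite (cor1E p_prime sH chiH.2 phiK Ht chit Hg) /corsum (extE nN).
Qed.

Lemma cor1_ext (phi : G -> 'F_p) g : hom1 K phi -> coset_const K N phi -> U g ->
  cor1 U chiU (ext N K phi) g = cor1 H chi phi (rep N H g).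
Proof.
move=> phiK phiN Ug; have [Hr Nr] := repP Ug.
have phiU : hom_on (kerH U chiU) (ext N K phi).
  move=> x y Kx Ky; apply: (hom1_ext nN sK phiN phiK).2; exact: kerH_saturate.
have [[t [Ht chit]]|chi0] := hom_on_Fp_cases sH chiH.2; last first.
  rewrite !cor1_hom0 //; last exact: saturate_hom0.
  by apply: (ext_congr nN) => //; split => //; exact: chi0.
have chiUt : chiU t = 1 by rewrite (extE nN).
rewrite (cor1E p_prime sU chiU_hom.2 phiU (sub_saturate nN Ht) chiUt Ug).
rewrite (cor1E p_prime sH chiH.2 phiK.2 Ht chit Hr); apply: eq_bigr => i _.
apply: (ext_congr nN) => //.
  exact: (corsum_term_ker p_prime sH chiH.2 i Ht chit Hr).
exact: (congr_mul2 nN _ _ Nr).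
Qed.

End OpenNormal.

Hypothesis cup_exact_open : forall U : set G, open_subgroup U -> cup_exact p U.

Lemma cor1_of_cup1_coboundary (psi : G -> 'F_p) : hom1 H psi ->
  coboundary2 H (cup1 chi psi) ->
  exists phi, hom1 K phi /\ forall g, H g -> psi g = cor1 H chi phi g.
Proof.
move=> psiH [f [fH cobf]].
have [N [nN [chiN [psiN fN]]]] := small_open_normalP (filterI
  (coset_const_near clH chiH.1)
  (filterI (coset_const_near clH psiH.1) (coset_const_near clH fH))).
have oU := saturate_open_subgroup nN sH.
have [phi [phiU psiE]] := ((cup_exact_open oU (hom1_ext nN sH chiN chiH)).1 _
  (hom1_ext nN sH psiN psiH)).1 (coboundary2_ext nN sH fN cobf).
exists phi; split; first exact: hom1S (sub_kerH_saturate nN chiN) phiU.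
move=> g Hg; rewrite -(extE nN psiN Hg) psiE; last exact: (sub_saturate nN Hg).
exact: cor1_saturate phiU.2 Hg.
Qed.

Lemma cup1_coboundary_of_cor1 (psi phi : G -> 'F_p) : hom1 H psi -> hom1 K phi ->
  (forall g, H g -> psi g = cor1 H chi phi g) -> coboundary2 H (cup1 chi psi).
Proof.
move=> psiH phiK psiE.
have [N [nN [chiN [psiN phiN]]]] := small_open_normalP (filterI
  (coset_const_near clH chiH.1)
  (filterI (coset_const_near clH psiH.1) (coset_const_near clK phiK.1))).
have oU := saturate_open_subgroup nN sH.
have phiU := hom1S (@kerH_saturate N) (hom1_ext nN sK phiN phiK).
have psiUE g : saturate N H g ->
    ext N H psi g = cor1 (saturate N H) (ext N H chi) (ext N K phi) g.
  by move=> Ug; rewrite cor1_ext // -psiE //; case: (repP Ug).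
have := ((cup_exact_open oU (hom1_ext nN sH chiN chiH)).1 _
  (hom1_ext nN sH psiN psiH)).2 (ex_intro _ _ (conj phiU psiUE)).
apply: coboundary2_restrict (sub_saturate nN) _ => x y Hx Hy.
by rewrite /cup1 (extE nN chiN Hx) (extE nN psiN Hy).
Qed.

Lemma cup1_of_res_coboundary (c : G -> G -> 'F_p) : cocycle2 H c ->
  coboundary2 K c ->
  exists psi, hom1 H psi /\ coboundary2 H (fun x y => c x y - cup1 chi psi x y).
Proof.
move=> cH [f [fK cobf]].
have [N [nN [chiN [cN fN]]]] := small_open_normalP (filterI
  (coset_const_near clH chiH.1)
  (filterI (coset_const2_near clH cH.1) (coset_const_near clK fK))).
have oU := saturate_open_subgroup nN sH.
have cobU : coboundary2 (kerH (saturate N H) (ext N H chi)) (ext2 N H c).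
  apply: coboundary2_restrict (@kerH_saturate N) _ (coboundary2_ext nN sK fN cobf).
  move=> x y /(@kerH_saturate N) Kx /(@kerH_saturate N) Ky.
  by apply: ext2_sub => // z [].
have [psi [psiU cobpsi]] := ((cup_exact_open oU (hom1_ext nN sH chiN chiH)).2 _
  (cocycle2_ext nN sH cN cH)).1 cobU.
exists psi; split; first exact: hom1S (sub_saturate nN) psiU.
apply: coboundary2_restrict (sub_saturate nN) _ cobpsi => x y Hx Hy.
by rewrite /cup1 (extE nN chiN Hx) (ext2E nN cN Hx Hy).
Qed.

End ClosedSubgroup.

Theorem mainTheorem11 (p : nat) (p_prime : prime p) (Gamma : profinite_group) :
  (forall U : set Gamma, open_subgroup U -> cup_exact p U) ->
  forall H : set Gamma, closed_subgroup H -> cup_exact p H.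
Proof.
move=> cup_exact_open H [clH sH] chi chiH; split=> [psi psiH|c cH]; split.
- exact: cor1_of_cup1_coboundary.
- by move=> [phi [phiK psiE]]; exact: cup1_coboundary_of_cor1 phiK psiE.
- exact: cup1_of_res_coboundary.
- by move=> [psi [_ cob]]; exact: res_coboundary_of_cup1 cob.
Qed.
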